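(* Let $s$ be a continuous proper scoring rule with convex exposure on an $n$-outcome forecast domain $\mathcal{D}$, with expected reward function $G$ and exposure function $\mathbf{g}$. Let $\mathbf{p}_1,\dots,\mathbf{p}_m\in\mathcal{D}$ and non-negative weights $w_1,\dots,w_m$ with $\sum_i w_i=1$. Then the function \[d(\mathbf{x}):=\sum_{i=1}^m w_i\,D_G(\mathbf{x}\parallel\mathbf{p}_i),\qquad \mathbf{x}\in\mathcal{D},\] is uniquely minimized at $\mathbf{x}=\mathbf{p}^*$, the quasi-arithmetic pool of $(\mathbf{p}_i,w_i)_{i=1}^m$ with respect to $\mathbf{g}$.
   Context: $\Delta^n$ is the standard simplex in $\mathbb{R}^n$ with vertices $\delta_1,\dots,\delta_n$. An $n$-outcome forecast domain is a convex $(n-1)$-dimensional subset of $\Delta^n$. A proper scoring rule on $\mathcal{D}$ is $s:\mathcal{D}\times[n]\to\mathbb{R}$ with $\sum_j p(j)s(\mathbf{p};j)\ge\sum_j p(j)s(\mathbf{x};j)$ for all $\mathbf{p},\mathbf{x}\in\mathcal{D}$, equality only if $\mathbf{x}=\mathbf{p}$. $G(\mathbf{p}):=\sum_j p(j)s(\mathbf{p};j)$ is differentiable and strictly convex for continuous $s$, and $\mathbf{g}=\nabla G$ (values taken modulo translation by $\mathbf{1}_n$). Convex exposure means the range of $\mathbf{g}$ is convex. The QA pool is the unique $\mathbf{p}^*\in\mathcal{D}$ with $\mathbf{g}(\mathbf{p}^* )=\sum_i w_i\mathbf{g}(\mathbf{p}_i)$ (modulo $\mathbf{1}_n$). The Bregman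 divergence is $D_G(\mathbf{p}\parallel\mathbf{q}):=G(\mathbf{p})-G(\mathbf{q})-\langle\mathbf{g}(\mathbf{q}),\mathbf{p}-\mathbf{q}\rangle$. *)

From HB Require Import structures.
From mathcomp Require Import all_boot all_order all_algebra.
From mathcomp Require Import reals.
Set Implicit Arguments. Unset Strict Implicit. Unset Printing Implicit Defensive.
Import Order.TTheory GRing.Theory Num.Theory.
Local Open Scope ring_scope.

Section Defs.
Variables (R : realType) (n : nat).

Definition vec := 'I_n -> R.

Definition dot (x y : vec) : R := \sum_(j < n) x j * y j.
Definition vsub (x y : vec) : vec := fun j => x j - y j.
Definition norm1 (x : vec) : R := \sum_(j < n) `|x j|.

Definition in_simplex (x : vec) : Prop :=
  (forall j, 0 <= x j) /\ \sum_(j < n) x j = 1.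

Definition convex_set (D : vec -> Prop) : Prop :=
  forall x y (t : R), D x -> D y -> 0 <= t <= 1 ->
    D (fun j => t * x j + (1 - t) * y j).

(* D is (n-1)-dimensional: D is nonempty and the linear span of the
   differences x - y (x, y in D), i.e. the direction space of the affine hull
   of D, is the whole hyperplane {v | sum_j v j = 0}. *)
Definition full_dim (D : vec -> Prop) : Prop :=
  (exists x, D x) /\
  forall v : vec, \sum_(j < n) v j = 0 ->
    exists (k : nat) (c : 'I_k -> R) (a b : 'I_k -> vec),
      (forall i, D (a i) /\ D (b i)) /\
      forall j, v j = \sum_(i < k) c i * (a i j - b i j).

Definition forecast_domain (D : vec -> Prop) : Prop :=
  (forall x, D x -> in_simplex x) /\ convex_set D /\ full_dim D.

(* s p j = s(p; j).  Proper scoring rule on D (strictly proper). *)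
Definition proper_scoring_rule (D : vec -> Prop) (s : vec -> vec) : Prop :=
  forall p x, D p -> D x ->
    dot p (s x) <= dot p (s p) /\ (dot p (s x) = dot p (s p) -> x = p).

Definition continuous_on_dom (D : vec -> Prop) (s : vec -> vec) : Prop :=
  forall p, D p -> forall j (e : R), 0 < e ->
    exists d : R, 0 < d /\
      forall x, D x -> norm1 (vsub x p) < d -> `|s x j - s p j| < e.

Definition expected_reward (s : vec -> vec) (p : vec) : R := dot p (s p).

(* Since D spans the hyperplane sum = 0, g(p) is thereby
   determined exactly modulo translation by the all-ones vector. *)
Definition is_gradient_on (D : vec -> Prop) (G : vec -> R) (g : vec -> vec) : Prop :=
  forall p, D p -> forall e : R, 0 < e ->
    exists d : R, 0 < d /\
      forall x, D x -> norm1 (vsub x p) < d ->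
        `|G x - G p - dot (g p) (vsub x p)| <= e * norm1 (vsub x p).

Definition eqmod1 (u v : vec) : Prop := exists c : R, forall j, u j = v j + c.

Definition convex_exposure (D : vec -> Prop) (g : vec -> vec) : Prop :=
  forall p q (t : R), D p -> D q -> 0 <= t <= 1 ->
    exists r, D r /\ eqmod1 (g r) (fun j => t * g p j + (1 - t) * g q j).

Definition is_QA_pool (D : vec -> Prop) (g : vec -> vec) (m : nat)
  (P : 'I_m -> vec) (w : 'I_m -> R) (pstar : vec) : Prop :=
  D pstar /\ eqmod1 (g pstar) (fun j => \sum_(i < m) w i * g (P i) j).

Definition bregman (G : vec -> R) (g : vec -> vec) (p q : vec) : R :=
  G p - G q - dot (g q) (vsub p q).

Definition wdiv (G : vec -> R) (g : vec -> vec) (m : nat)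
  (P : 'I_m -> vec) (w : 'I_m -> R) (x : vec) : R :=
  \sum_(i < m) w i * bregman G g x (P i).

End Defs.

From HB Require Import structures.
From mathcomp Require Import all_boot all_order all_algebra.
From mathcomp Require Import reals.
From mathcomp Require Import lra ring.
Set Implicit Arguments. Unset Strict Implicit. Unset Printing Implicit Defensive.
Import Order.TTheory GRing.Theory Num.Theory.
Local Open Scope ring_scope.

(* Propriety gives G(x) - G(p) <= <s(x), x - p>; along a segment of D from p
   and with s continuous, this bounds the directional derivative:
   <g(p), y - p> <= <s(p), y - p>.  Strict propriety gives
   G(x) - G(p) > <s(p), x - p> for x <> p, hence D_G(x || p) > 0.  Since
   g(pstar) is the w-mean of the g(p_i) up to a multiple of 1_n and x - pstar
   has coordinate sum 0, d(x) - d(pstar) is exactly D_G(x || pstar).  The pool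
   exists because convex exposure is closed under iterated two-point mixing. *)

Section Real.
Variable R : realType.

Lemma le0_of_le_mul_eps (a K : R) : 0 <= K ->
  (forall e : R, 0 < e -> a <= e * K) -> a <= 0.
Proof.
move=> K0 small; apply/ler_addgt0Pr => e e0; rewrite add0r.
have K1 : 0 < K + 1 by lra.
apply: le_trans (small _ (divr_gt0 e0 K1)) _.
by rewrite mulrAC ler_pdivrMr // ler_pM2l //; lra.
Qed.

Lemma exists_small_scaling (N d : R) : 0 <= N -> 0 < d ->
  exists t : R, [/\ 0 < t, t <= 1 & t * N < d].
Proof.
move=> N0 d0; have dN : 0 < d + N by lra.
exists (d / (d + N)); split; first exact: divr_gt0.
  by rewrite ler_pdivrMr // mul1r; lra.
rewrite mulrAC ltr_pdivrMr //; nra.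
Qed.

Lemma exists_common_radius (I : finType) (Q : I -> R -> Prop) :
  (forall i d d', 0 < d' <= d -> Q i d -> Q i d') ->
  (forall i, exists d, 0 < d /\ Q i d) ->
  exists d, 0 < d /\ forall i, Q i d.
Proof.
move=> Qmono Qex.
suff [d [d0 Qd]] : exists d, 0 < d /\ forall i, i \in enum I -> Q i d.
  by exists d; split => // i; apply: Qd; rewrite mem_enum.
elim: (enum I) => [|i r [d [d0 Qd]]]; first by exists 1.
have [di [di0 Qi]] := Qex i.
have dm0 : 0 < Num.min d di by rewrite lt_min d0 di0.
exists (Num.min d di); split => // j; rewrite inE => /predU1P[-> | jr].
  by apply: Qmono Qi; rewrite dm0 ge_min lexx orbT.
by apply: Qmono (Qd j jr); rewrite dm0 ge_min lexx.
Qed.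

End Real.

Section Vectors.
Variables (R : realType) (n : nat).
Implicit Types (u v a b : vec R n).

Lemma dotC u v : dot u v = dot v u.
Proof. by apply: eq_bigr => j _; rewrite mulrC. Qed.

Lemma dotBr u a b : dot u (vsub a b) = dot u a - dot u b.
Proof. by rewrite /dot -sumrB; apply: eq_bigr => j _; rewrite mulrBr. Qed.

Lemma dotBl u a b : dot (vsub a b) u = dot a u - dot b u.
Proof. by rewrite dotC dotBr !(dotC u). Qed.

Lemma dot_scaler u v a (t : R) :
  (forall j, v j = t * a j) -> dot u v = t * dot u a.
Proof. by move=> va; rewrite /dot mulr_sumr; apply: eq_bigr => j _; rewrite va mulrCA. Qed.

Lemma norm1_ge0 v : 0 <= norm1 v.
Proof. exact: sumr_ge0. Qed.

Lemma norm1_scale v a (t : R) :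
  0 <= t -> (forall j, v j = t * a j) -> norm1 v = t * norm1 a.
Proof.
move=> t0 va; rewrite /norm1 mulr_sumr; apply: eq_bigr => j _.
by rewrite va normrM ger0_norm.
Qed.

Lemma dot_le_norm1 u v (e : R) :
  (forall j, `|u j| <= e) -> dot u v <= e * norm1 v.
Proof.
move=> ue; rewrite /norm1 mulr_sumr; apply: ler_sum => j _.
apply: le_trans (ler_norm _) _.
by rewrite normrM ler_wpM2r.
Qed.

Lemma dot_eqmod1 u u' v :
  eqmod1 u u' -> \sum_(j < n) v j = 0 -> dot u v = dot u' v.
Proof.
move=> [c uc] v0; rewrite /dot.
under eq_bigr do rewrite uc mulrDl.
by rewrite big_split /= -mulr_sumr v0 mulr0 addr0.
Qed.

Lemma dot_suml m (w : 'I_m -> R) (f : 'I_m -> vec R n) v :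
  dot (fun j => \sum_(i < m) w i * f i j) v = \sum_(i < m) w i * dot (f i) v.
Proof.
rewrite /dot; under eq_bigr do rewrite mulr_suml.
rewrite exchange_big /=; apply: eq_bigr => i _; rewrite mulr_sumr.
by apply: eq_bigr => j _; rewrite mulrA.
Qed.

Lemma sum_vsub_simplex a b :
  in_simplex a -> in_simplex b -> \sum_(j < n) vsub a b j = 0.
Proof. by move=> [_ a1] [_ b1]; rewrite /vsub sumrB a1 b1 subrr. Qed.

End Vectors.

Section ScoringRule.
Variables (R : realType) (n : nat) (D : vec R n -> Prop) (s g : vec R n -> vec R n).
Hypothesis proper_s : proper_scoring_rule D s.
Local Notation G := (expected_reward s).

Lemma expected_reward_sub_le p x : D p -> D x -> G x - G p <= dot (s x) (vsub x p).
Proof.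
move=> Dp Dx; have [le_ps _] := proper_s Dp Dx.
rewrite /expected_reward dotBr !(dotC (s x)); lra.
Qed.

Lemma expected_reward_sub_gt p x : D p -> D x -> x <> p ->
  dot (s p) (vsub x p) < G x - G p.
Proof.
move=> Dp Dx xp; have [le_xs eq_xs] := proper_s Dx Dp.
have lt_xs : dot x (s p) < dot x (s x).
  rewrite lt_neqAle le_xs andbT; apply/eqP => eq_sx.
  exact: xp (esym (eq_xs eq_sx)).
rewrite /expected_reward dotBr !(dotC (s p)); lra.
Qed.

Hypothesis cont_s : continuous_on_dom D s.

Lemma continuous_on_dom_uniform p (e : R) : D p -> 0 < e ->
  exists d, 0 < d /\ forall j x, D x -> norm1 (vsub x p) < d ->
    `|s x j - s p j| < e.
Proof.
move=> Dp e0; apply: exists_common_radius => [j d d' /andP[_ le_d] near_d x Dx|j].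
  by move=> /lt_le_trans/(_ le_d); apply: near_d.
exact: cont_s.
Qed.

Hypotheses (convex_D : convex_set D) (grad_g : is_gradient_on D G g).

Lemma gradient_le_score p y : D p -> D y ->
  dot (g p) (vsub y p) <= dot (s p) (vsub y p).
Proof.
move=> Dp Dy; set N := norm1 (vsub y p).
rewrite -subr_le0; apply: (le0_of_le_mul_eps (K := 2 * N)) => [|e e0].
  by rewrite mulr_ge0 ?norm1_ge0.
have [d1 [d1_0 near_grad]] := grad_g Dp e0.
have [d2 [d2_0 near_s]] := continuous_on_dom_uniform Dp e0.
have [t [t0 t1 tN]] := exists_small_scaling (norm1_ge0 (vsub y p))
  (ltac:(by rewrite lt_min d1_0 d2_0) : 0 < Num.min d1 d2).
pose x j := t * y j + (1 - t) * p j.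
have Dx : D x by apply: convex_D; rewrite ?(ltW t0) ?t1.
have xp j : vsub x p j = t * vsub y p j by rewrite /vsub /x; ring.
have Nx : norm1 (vsub x p) = t * N := norm1_scale (ltW t0) xp.
have [Nx1 Nx2] : norm1 (vsub x p) < d1 /\ norm1 (vsub x p) < d2.
  by move: tN; rewrite lt_min -Nx => /andP.
have /ler_normlP[grad_x _] := near_grad x Dx Nx1.
have cont_x : dot (vsub (s x) (s p)) (vsub x p) <= e * norm1 (vsub x p).
  by apply: dot_le_norm1 => j; apply/ltW/near_s.
have upper_x := expected_reward_sub_le Dp Dx.
rewrite dotBl Nx in cont_x; rewrite Nx in grad_x.
rewrite -(ler_pM2l t0) mulrBr -!(dot_scaler _ xp); lra.
Qed.

Lemma bregman_gt0 x p : D p -> D x -> x <> p -> 0 < bregman G g x p.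
Proof.
move=> Dp Dx xp; have := expected_reward_sub_gt Dp Dx xp.
have := gradient_le_score Dp Dx; rewrite /bregman; lra.
Qed.

End ScoringRule.

Lemma QA_pool_exists (R : realType) n (D : vec R n -> Prop) (g : vec R n -> vec R n)
    m (P : 'I_m -> vec R n) (w : 'I_m -> R) :
  convex_exposure D g -> (forall i, D (P i)) ->
  (forall i, 0 <= w i) -> \sum_(i < m) w i = 1 ->
  exists pstar, is_QA_pool D g P w pstar.
Proof.
move=> cexp; elim: m P w => [|m IH] P w DP w0.
  by rewrite big_ord0 => /eqP; rewrite eq_sym oner_eq0.
rewrite big_ord_recr /= => w1.
pose w_ (i : 'I_m) := w (widen_ord (leqnSn m) i).
pose P_ (i : 'I_m) := P (widen_ord (leqnSn m) i).
have w_sum : \sum_(i < m) w_ i = 1 - w ord_max by rewrite -w1 addrK.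
have [wl1 | wl_neq1] := eqVneq (w ord_max) 1.
  have w_0 i : w_ i = 0.
    apply: (psumr_eq0P (P := xpredT) (F := w_) (fun j _ => w0 _)) => //.
    by rewrite w_sum wl1 subrr.
  exists (P ord_max); split => //; exists 0 => j.
  rewrite big_ord_recr /= big1 => [|i _]; last by rewrite [w _]w_0 mul0r.
  by rewrite wl1; ring.
have rest0 : 0 < 1 - w ord_max.
  have : 0 <= \sum_(i < m) w_ i by apply: sumr_ge0 => i _; apply: w0.
  by rewrite lt_def subr_eq0 eq_sym wl_neq1 w_sum.
have rest_neq0 : 1 - w ord_max != 0 by rewrite gt_eqF.
have [r' [Dr' [c' g_r']]] := IH P_ (fun i => w_ i / (1 - w ord_max))
  (fun i => DP _) (fun i => divr_ge0 (w0 _) (ltW rest0))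
  (ltac:(by rewrite -mulr_suml w_sum divff)).
have [r [Dr [c g_r]]] := cexp r' (P ord_max) (1 - w ord_max) Dr' (DP _)
  (ltac:(by rewrite (ltW rest0) gerBl w0)).
exists r; split => //; exists ((1 - w ord_max) * c' + c) => j.
rewrite g_r g_r' big_ord_recr /= mulrDr mulr_sumr.
rewrite (eq_bigr (fun i => w_ i * g (P_ i) j)) /w_ /P_; first by ring.
by move=> i _; rewrite mulrA mulrCA (divff rest_neq0) mulr1.
Qed.

Lemma bregman_subl (R : realType) n (G : vec R n -> R) (g : vec R n -> vec R n) x y q :
  bregman G g x q - bregman G g y q = G x - G y - dot (g q) (vsub x y).
Proof. by rewrite /bregman !dotBr; ring. Qed.

Lemma wdiv_sub_QA_pool (R : realType) n (D : vec R n -> Prop) (G : vec R n -> R)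
    (g : vec R n -> vec R n) m (P : 'I_m -> vec R n) (w : 'I_m -> R) pstar x :
  is_QA_pool D g P w pstar -> \sum_(i < m) w i = 1 ->
  \sum_(j < n) vsub x pstar j = 0 ->
  wdiv G g P w x - wdiv G g P w pstar = bregman G g x pstar.
Proof.
move=> [_ g_pool] w1 sum0; rewrite /wdiv -sumrB.
under eq_bigr do rewrite -mulrBr bregman_subl mulrBr.
rewrite sumrB -mulr_suml w1 mul1r -(dot_suml w (fun i => g (P i))).
by rewrite -(dot_eqmod1 g_pool sum0).
Qed.

Theorem proposition4p3 (R : realType) (n m : nat)
  (D : vec R n -> Prop) (s : vec R n -> vec R n) (g : vec R n -> vec R n)
  (P : 'I_m -> vec R n) (w : 'I_m -> R) :
  forecast_domain D ->
  proper_scoring_rule D s ->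
  continuous_on_dom D s ->
  is_gradient_on D (expected_reward s) g ->
  convex_exposure D g ->
  (forall i, D (P i)) ->
  (forall i, 0 <= w i) ->
  \sum_(i < m) w i = 1 ->
  (exists pstar, is_QA_pool D g P w pstar) /\
  (forall pstar, is_QA_pool D g P w pstar ->
     forall x, D x -> x <> pstar ->
       wdiv (expected_reward s) g P w pstar < wdiv (expected_reward s) g P w x).
Proof.
move=> [D_simplex [convex_D _]] proper_s cont_s grad_g cexp DP w0 w1.
split; first exact: QA_pool_exists.
move=> pstar pool x Dx x_neq; have [Dpstar _] := pool.
have sum0 := sum_vsub_simplex (D_simplex _ Dx) (D_simplex _ Dpstar).
rewrite -subr_gt0 (wdiv_sub_QA_pool _ pool w1 sum0).
exact: bregman_gt0 proper_s cont_s convex_D grad_g x pstar Dpstar Dx x_neq.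
Qed.
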